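(* Consider instances with binary domains ($|D_i|=2$ for all $i$) and a natural target distribution $\pi$ (i.e. $k\pi_i^j$ is an integer for all $i,j$), with loss $\|\cdot\|_1$. Consider the local search algorithm with parameter $\ell=1$: start from an arbitrary committee $A\subseteq C$ with $|A|=k$; while there exist $a\in A$ and $c\in C\setminus A$ with $\|\pi,r((A\setminus\{a\})\cup\{c\})\|_1<\|\pi,r(A)\|_1$, replace $A$ by $(A\setminus\{a\})\cup\{c\}$; output $A$. Then for every instance and every starting committee, the output $A$ satisfies $\|\pi,r(A)\|_1-\|\pi,r(A^* )\|_1\le p$, where $A^*$ is a committee of size $k$ optimal for $\|\cdot\|_1$ and $p$ is the number of attributes.
   Context: Attributes $X_1,\dots,X_p$, each with finite domain $D_i=\{x_i^1,\dots,x_i^{q_i}\}$. A candidate database is a finite set $C$ in which each candidate $c$ has a value vector $(X_1(c),\dots,X_p(c))\in D_1\times\dots\times D_p$ (different candidates may share a vector). A target distribution is $\pi=(\pi_1,\dots,\pi_p)$ with $\pi_i=(\pi_i^1,\dots,\pi_i^{q_i})$ nonnegative reals summing to $1$; $k\in\{1,\dots,|C|\}$. For $A\subseteq C$ with $|A|=k$, $r_i^j(A)=|\{c\in A: X_i(c)=x_i^j\}|/k$, and $\|\pi,r(A)\|_1=\sum_{i,j}|r_i^j(A)-\pi_i^j|$. A committee of size $k$ is optimal if it minimizes this loss over all $k$-element subsets of $C$. *)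

From HB Require Import structures.
From mathcomp Require Import all_boot all_order all_algebra.
From mathcomp Require Export all_boot all_order all_algebra.
Set Implicit Arguments. Unset Strict Implicit. Unset Printing Implicit Defensive.
Import Order.TTheory GRing.Theory Num.Theory.
Local Open Scope ring_scope.

Section Committee.
Variables (R : realFieldType) (C : finType) (p : nat).
(* binary domains: each attribute i : 'I_p takes a value in bool (D_i = {false,true}) *)
Variable X : C -> 'I_p -> bool.
Variable pi : 'I_p -> bool -> R.
Variable k : nat.

Definition ratio (A : {set C}) (i : 'I_p) (j : bool) : R :=
  (#|[set c in A | X c i == j]|)%:R / k%:R.

Definition loss (A : {set C}) : R :=
  \sum_(i < p) \sum_(j : bool) `|ratio A i j - pi i j|.

Definition is_distribution : Prop :=
  forall i, (forall j, 0 <= pi i j) /\ \sum_(j : bool) pi i j = 1.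

Definition natural_target : Prop :=
  forall i j, exists z : int, k%:R * pi i j = z%:~R.

Definition swap (A : {set C}) (a c : C) : {set C} := c |: (A :\ a).

Definition ls_step : rel {set C} := fun A B =>
  [exists a in A, exists c in ~: A, (B == swap A a c) && (loss B < loss A)].

Definition ls_terminal (A : {set C}) : bool :=
  [forall a in A, forall c in ~: A, ~~ (loss (swap A a c) < loss A)].

Definition ls_output (A0 A : {set C}) : Prop :=
  connect ls_step A0 A /\ ls_terminal A.

Definition optimal (Astar : {set C}) : Prop :=
  #|Astar| = k /\ forall B : {set C}, #|B| = k -> loss Astar <= loss B.

End Committee.

From Pilot Require Import Defs.
From mathcomp Require Import all_boot all_order all_algebra zify ring lra.
Import Order.TTheory GRing.Theory Num.Theory.
Set Implicit Arguments. Unset Strict Implicit. Unset Printing Implicit Defensive.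
Local Open Scope ring_scope.

(* For a committee A of size k write n_i(A) for the number of members with
   X_i = true and z_i = k pi_i^true. Binary domains and integrality give
   k ||pi, r(A)||_1 = 2 dev(A) with dev(A) = sum_i |n_i(A) - z_i|, so it suffices
   to show 2 (dev(A) - dev(B)) <= p k for a local optimum A and any B of size k.
   Put s_i = sgz (n_i(A) - z_i), let Z be the number of i with n_i(A) = z_i and
   weigh a candidate x by w(x) = sum_i s_i X_i(x). A swap of a for c changes
   dev by at most w(c) - w(a) + Z, so local optimality gives w(a) <= w(c) + Z.
   Since |d| - |e| <= sgz d (d - e), dev(A) - dev(B) is at most the weight of
   A \ B minus that of B \ A, hence at most k Z by comparing the two halves
   elementwise. On the other hand dev(A) - dev(B) <= dev(A) <= k (p - Z).
   Adding both bounds gives the claim. *)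

Lemma cardsD_sym (T : finType) (A B : {set T}) :
  #|A| = #|B| -> #|A :\: B| = #|B :\: A|.
Proof. by move=> AB; have := cardsID A B; have := cardsID B A; rewrite setIC; lia. Qed.

Lemma ler_sum_pairwise (R : numDomainType) (T : finType) (U V : {set T})
    (f g : T -> R) :
  #|U| = #|V| -> (forall u v, u \in U -> v \in V -> f u <= g v) ->
  \sum_(u in U) f u <= \sum_(v in V) g v.
Proof.
move=> UV fg.
have double_sum : \sum_(u in U) \sum_(v in V) f u <= \sum_(u in U) \sum_(v in V) g v.
  by apply: ler_sum => u Uu; apply: ler_sum => v Vv; exact: fg.
rewrite (eq_bigr (fun u => f u *+ #|V|)) in double_sum; last by move=> u _; rewrite sumr_const.
rewrite sumrMnl sumr_const -UV in double_sum.
have [U0|U_gt0] := posnP #|U|; last by rewrite ler_pMn2r in double_sum.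
have /eqP := U0; have /eqP := etrans (esym UV) U0.
by rewrite !cards_eq0 => /eqP-> /eqP->; rewrite !big_set0.
Qed.

Lemma normz_add_bit_diff (d : int) (b b' : bool) :
  `|d + (b%:Z - b'%:Z)| <= `|d| + sgz d * (b%:Z - b'%:Z) + (d == 0)%:Z.
Proof.
case: (ltgtP d 0) => [d_lt0|d_gt0|->].
- by rewrite ltr0_sgz // (ltr0_norm d_lt0); case: b; case: b' => /=; lia.
- by rewrite gtr0_sgz // (gtr0_norm d_gt0); case: b; case: b' => /=; lia.
- by rewrite sgz0; case: b; case: b' => /=; lia.
Qed.

Lemma normz_sub_le_sgz (d e : int) : `|d| - `|e| <= sgz d * (d - e).
Proof.
have norm_e : -e <= `|e| /\ e <= `|e| by rewrite -{1}normrN !ler_norm.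
case: (ltgtP d 0) => [d_lt0|d_gt0|->].
- by rewrite ltr0_sgz // (ltr0_norm d_lt0); lia.
- by rewrite gtr0_sgz // (gtr0_norm d_gt0); lia.
- by rewrite sgz0 normr0; lia.
Qed.

Lemma normz_sub_le_indicator (n k : nat) (z : int) :
  (n <= k)%N -> 0 <= z <= k%:Z -> `|n%:Z - z| <= k%:Z * (1 - (n%:Z - z == 0)%:Z).
Proof.
move=> n_le_k /andP[z_ge0 z_le_k]; case: eqP => [->|/eqP nz_neq0].
  by rewrite normr0; lia.
by case: (ltgtP (n%:Z - z) 0) => [lt0|gt0|]; rewrite ?(ltr0_norm lt0) ?(gtr0_norm gt0); lia.
Qed.

Section Counts.
Variables (C : finType) (p : nat) (X : C -> 'I_p -> bool).

Definition ntrue (A : {set C}) (i : 'I_p) : nat := #|[set c in A | X c i]|.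

Lemma card_attr_true (A : {set C}) i : #|[set c in A | X c i == true]| = ntrue A i.
Proof. by apply: eq_card => x; rewrite !inE eqb_id. Qed.

Lemma card_attr_false (A : {set C}) i :
  #|[set c in A | X c i == false]| = (#|A| - ntrue A i)%N.
Proof.
rewrite -(cardsID [set c | X c i] A) /ntrue.
have -> : [set c in A | X c i] = A :&: [set c | X c i] by apply/setP => x; rewrite !inE.
by rewrite addKn; apply: eq_card => x; rewrite !inE; case: (X x i); rewrite ?andbF ?andbT.
Qed.

Lemma ntrue_le_card (A : {set C}) i : (ntrue A i <= #|A|)%N.
Proof. by apply: subset_leq_card; apply/subsetP => x; rewrite inE => /andP[]. Qed.

Lemma ntrueE (A : {set C}) i : (ntrue A i)%:Z = \sum_(x in A) (X x i : nat)%:Z.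
Proof.
rewrite -(big_morph Posz PoszD (erefl (Posz 0))) /ntrue -sum1_card.
rewrite (eq_bigl (fun x => (x \in A) && X x i)); last by move=> x; rewrite inE.
by rewrite big_mkcondr; congr Posz; apply: eq_bigr => x _; case: (X x i).
Qed.

Lemma card_swap (A : {set C}) a c : a \in A -> c \notin A -> #|swap A a c| = #|A|.
Proof.
move=> aA cA; rewrite /swap cardsU1 (cardsD1 a A) aA !inE negb_and negbK cA orbT.
by rewrite add1n.
Qed.

Lemma ntrue_swap (A : {set C}) a c i : a \in A -> c \notin A ->
  (ntrue (swap A a c) i + X a i = ntrue A i + X c i)%N.
Proof.
move=> aA cA; rewrite /ntrue /swap.
rewrite (cardsD1 a [set x in A | X x i]) (cardsD1 c [set x in c |: A :\ a | X x i]).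
rewrite !inE aA eqxx /=.
have -> : [set x in c |: A :\ a | X x i] :\ c = [set x in A | X x i] :\ a.
  apply/setP => x; rewrite !inE; case: (eqVneq x c) => [->|_] /=.
    by rewrite (negbTE cA) andbF.
  by rewrite andbA.
lia.
Qed.

Variable z : 'I_p -> int.

Definition dev (A : {set C}) : int := \sum_(i < p) `|(ntrue A i)%:Z - z i|.

Lemma dev_ge0 (A : {set C}) : 0 <= dev A.
Proof. by apply: sumr_ge0. Qed.

End Counts.

Section LossDev.
Variables (R : realFieldType) (C : finType) (p : nat) (X : C -> 'I_p -> bool).
Variables (pi : 'I_p -> bool -> R) (k : nat) (z : 'I_p -> int).
Hypotheses (k_gt0 : (0 < k)%N) (kpiE : forall i, k%:R * pi i true = (z i)%:~R).
Hypothesis pi_false : forall i, pi i false = 1 - pi i true.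

Lemma loss_dev (A : {set C}) : #|A| = k -> loss X pi k A * k%:R = 2 * (dev X z A)%:~R.
Proof.
move=> cardA; rewrite /loss /dev mulr_suml rmorph_sum mulr_sumr; apply: eq_bigr => i _.
rewrite big_bool /= /Defs.ratio card_attr_true card_attr_false cardA natrB; last first.
  by rewrite -cardA ntrue_le_card.
have k_neq0 : k%:R != 0 :> R by rewrite pnatr_eq0 -lt0n.
have piE : pi i true = (z i)%:~R / k%:R by rewrite -kpiE; field.
set n := ntrue X A i.
have trueE : n%:R / k%:R - pi i true = (n%:Z - z i)%:~R / k%:R.
  by rewrite piE intrB -pmulrn; field.
have falseE : (k%:R - n%:R) / k%:R - pi i false = - ((n%:Z - z i)%:~R / k%:R).
  by rewrite pi_false piE intrB -pmulrn; field.
rewrite trueE falseE normrN normrM normfV (@gtr0_norm _ k%:R) ?ltr0n // -intr_norm.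
by field.
Qed.

Lemma ls_terminal_dev_le (A : {set C}) : #|A| = k -> ls_terminal X pi k A ->
  forall a c, a \in A -> c \notin A -> dev X z A <= dev X z (swap A a c).
Proof.
move=> cardA term a c aA cA.
move/forallP/(_ a)/implyP/(_ aA)/forallP/(_ c)/implyP: term.
rewrite in_setC => /(_ cA); rewrite -leNgt => loss_le.
rewrite -(ler_int R) -(ler_pM2l (ltr0Sn R 1)) -loss_dev // -loss_dev ?card_swap //.
by rewrite ler_pM2r ?ltr0n.
Qed.

End LossDev.

Section LocalOptimum.
Variables (C : finType) (p : nat) (X : C -> 'I_p -> bool) (k : nat) (z : 'I_p -> int).
Variables (A Astar : {set C}).
Hypotheses (cardA : #|A| = k) (cardAstar : #|Astar| = k).
Hypothesis z_bounds : forall i, 0 <= z i <= k%:Z.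
Hypothesis dev_local : forall a c, a \in A -> c \notin A -> dev X z A <= dev X z (swap A a c).

Let d i : int := (ntrue X A i)%:Z - z i.
Let ties : int := \sum_(i < p) (d i == 0)%:Z.
Let w x : int := \sum_(i < p) sgz (d i) * (X x i : nat)%:Z.
Let W (B : {set C}) : int := \sum_(x in B) w x.

Lemma dev_swap_le a c : a \in A -> c \notin A ->
  dev X z (swap A a c) <= dev X z A + (w c - w a) + ties.
Proof.
move=> aA cA; rewrite /dev /w /ties -!sumrB -!big_split /=; apply: ler_sum => i _.
have -> : (ntrue X (swap A a c) i)%:Z - z i = d i + ((X c i)%:Z - (X a i)%:Z).
  by have := ntrue_swap X i aA cA; rewrite /d; lia.
by apply: le_trans (normz_add_bit_diff _ _ _) _; rewrite mulrBr.
Qed.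

Lemma weight_le_swap a c : a \in A -> c \notin A -> w a <= w c + ties.
Proof.
move=> aA cA; have := le_trans (dev_local aA cA) (dev_swap_le aA cA).
by move: (dev X z A) (w c) (w a) ties => D wc wa t; lia.
Qed.

Lemma weightE (B : {set C}) : W B = \sum_(i < p) sgz (d i) * (ntrue X B i)%:Z.
Proof.
by rewrite /W /w exchange_big /=; apply: eq_bigr => i _; rewrite ntrueE mulr_sumr.
Qed.

Lemma dev_sub_le_weight : dev X z A - dev X z Astar <= W A - W Astar.
Proof.
rewrite !weightE /dev -!sumrB; apply: ler_sum => i _; rewrite -mulrBr.
apply: le_trans (normz_sub_le_sgz (d i) ((ntrue X Astar i)%:Z - z i)) _.
by rewrite /d opprB addrA subrK.
Qed.

Lemma weight_sub_setD : W A - W Astar = W (A :\: Astar) - W (Astar :\: A).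
Proof.
rewrite /W (big_setID (A:=A) Astar) (big_setID (A:=Astar) A) setIC /=.
by rewrite opprD addrACA subrr add0r.
Qed.

Lemma weight_setD_le : W (A :\: Astar) <= W (Astar :\: A) + (#|A :\: Astar|)%:Z * ties.
Proof.
have cardD : #|A :\: Astar| = #|Astar :\: A| by apply: cardsD_sym; rewrite cardA.
have := @ler_sum_pairwise _ _ _ _ w (fun c => w c + ties) cardD.
rewrite big_split /= sumr_const -cardD -mulr_natl natz; apply.
by move=> a c; rewrite !inE => /andP[_ aA] /andP[cA _]; apply: weight_le_swap.
Qed.

Lemma dev_le_untied : dev X z A <= k%:Z * p%:Z - k%:Z * ties.
Proof.
have : dev X z A <= \sum_(i < p) k%:Z * (1 - (d i == 0)%:Z).
  by apply: ler_sum => i _; apply: normz_sub_le_indicator (z_bounds i); rewrite -cardA ntrue_le_card.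
by rewrite -mulr_sumr sumrB sumr_const card_ord -/ties mulrBr natz.
Qed.

Lemma local_opt_dev_le : 2 * (dev X z A - dev X z Astar) <= k%:Z * p%:Z.
Proof.
have le_weight := dev_sub_le_weight; rewrite weight_sub_setD in le_weight.
have ties_ge0 : 0 <= ties by apply: sumr_ge0.
have le_ties : (#|A :\: Astar|)%:Z * ties <= k%:Z * ties.
  by rewrite ler_wpM2r // lez_nat -cardA subset_leq_card // subsetDl.
have := weight_setD_le; have := dev_le_untied; have := dev_ge0 X z Astar.
move: le_weight le_ties.
move: (dev X z A) (dev X z Astar) (W _) (W _) (_ * ties) (k%:Z * ties) (k%:Z * p%:Z).
by move=> ? ? ? ? ? ? ?; lia.
Qed.

End LocalOptimum.

Lemma connect_ls_step_card (R : realFieldType) (C : finType) (p : nat)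
    (X : C -> 'I_p -> bool) (pi : 'I_p -> bool -> R) (k : nat) (A0 B : {set C}) :
  connect (ls_step X pi k) A0 B -> #|A0| = k -> #|B| = k.
Proof.
case/connectP => s; elim: s A0 => [|A1 s IHs] A0 /=; first by move=> _ ->.
case/andP => step path_s last_s cardA0; apply: (IHs A1 path_s last_s).
case/existsP: step => a /andP[aA /existsP[c /andP[cA /andP[/eqP -> _]]]].
by rewrite card_swap // -in_setC.
Qed.

Section Target.
Variables (R : realFieldType) (p : nat) (pi : 'I_p -> bool -> R).
Hypothesis distr : is_distribution pi.

Lemma distribution_false i : pi i false = 1 - pi i true.
Proof. by have [_] := distr i; rewrite big_bool /= => <-; ring. Qed.

Lemma natural_target_bounds (k : nat) i (z : int) :
  (0 < k)%N -> k%:R * pi i true = z%:~R -> 0 <= z <= k%:Z.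
Proof.
move=> k_gt0 kpiE; have [pi_ge0 _] := distr i.
have pi_le1 : pi i true <= 1 by rewrite -subr_ge0 -distribution_false.
rewrite -(ler0z R) -(ler_int R) -kpiE -pmulrn.
by rewrite mulr_ge0 ?ler_piMr ?ler0n.
Qed.

End Target.

Theorem theorem1 (R : realFieldType) (C : finType) (p : nat)
    (X : C -> 'I_p -> bool) (pi : 'I_p -> bool -> R) (k : nat) :
  (0 < k)%N -> (k <= #|C|)%N ->
  is_distribution pi -> natural_target pi k ->
  forall A0 A Astar : {set C},
    #|A0| = k ->
    ls_output X pi k A0 A ->
    optimal X pi k Astar ->
    loss X pi k A - loss X pi k Astar <= p%:R.
Proof.
move=> k_gt0 _ distr nat_pi A0 A Astar cardA0 [reach term] [cardAstar _].
have [z kpiE] := fin_all_exists (fun i => nat_pi i true).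
have cardA := connect_ls_step_card reach cardA0.
have lossE := loss_dev X k_gt0 kpiE (distribution_false distr).
have := local_opt_dev_le cardA cardAstar (fun i => natural_target_bounds distr k_gt0 (kpiE i))
  (ls_terminal_dev_le k_gt0 kpiE (distribution_false distr) cardA term).
rewrite -(ler_int R) rmorphM rmorphB /= => dev_le.
rewrite -(@ler_pM2r _ k%:R) ?ltr0n // mulrBl !lossE //.
lra.
Qed.
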